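(* A mixed graph $G=(V,D,B)$ is HTC-infinite-to-one if and only if the maximum flow in the network $G_{\mathrm{flow}}$ defined below has size strictly less than $|D|=\sum_{v\in V}|\mathrm{pa}(v)|$.
   Context: A mixed graph is $G=(V,D,B)$ with $V=[m]$, $D$ directed edges $v\to w$, $B$ symmetric bidirected edges $v\leftrightarrow w$, no self-loops. $\mathrm{pa}(v)=\{w:w\to v\in D\}$, $\mathrm{sib}(v)=\{w:w\leftrightarrow v\in B\}$. A half-trek from $y$ to $w$ is a path $y\leftrightarrow w_0\to w_1\to\cdots\to w_r=w$ (left side $\{y\}$, right side $\{w_0,\dots,w_r\}$) or $y\to w_1\to\cdots\to w_r=w$, $r\ge0$ (left side $\{y\}$, right side $\{y,w_1,\dots,w_r\}$); nodes may repeat. A system of half-treks from $X$ to $Y$: half-treks with distinct sources forming $X$ and distinct targets forming $Y$; no sided intersection: pairwise disjoint left sides and pairwise disjoint right sides. $Y$ satisfies the half-trek criterion w.r.t. $v$ if $|Y|=|\mathrm{pa}(v)|$, $Y\cap(\{v\}\cup\mathrm{sib}(v))=\emptyset$, and there is a system of half-treks with no sided intersection from $Y$ to $\mathrm{pa}(v)$. $G$ is HTC-infinite-to-one if every family $(Y_v:v\in V)$ of subsets of $V$ either contains some $Y_v$ that fails the half-trek criterion w.r.t. $v$ or contains a pair $Y_v,Y_w$ with $v\in Y_w$ and $w\in Y_v$. Flows: in a directed graph with source $s$, sink $t$, node and edge capacities, a flow is a nonnegative edge function respecting edge capacities and, at each node $x\neq s,t$, conservation $\sum_u f(u,x)=\sum_w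 f(x,w)$ with this value at most the node capacity; its size is the total flow out of $s$. The network $G_{\mathrm{flow}}$ has nodes $s,t$, a node $L\{v,w\}$ for each unordered pair of distinct $v,w\in V$ with $v\leftrightarrow w\notin B$, and a node $R_v(w)$ for each $(v,w)\in V\times V$. Its edges are: $s\to L\{v,w\}$, $L\{v,w\}\to R_v(w)$ (and, by symmetry of the unordered pair, $L\{v,w\}\to R_w(v)$) for each such pair; $L\{v,w\}\to R_v(u)$ for all $v\ne w$ with $v\leftrightarrow w\notin B$ and $w\leftrightarrow u\in B$; $R_v(w)\to R_v(u)$ for all $v\in V$ and $w\to u\in D$; and $R_v(w)\to t$ for all $v\in V$, $w\in\mathrm{pa}(v)$. All edges and the nodes $s,t$ have capacity $\infty$; all other nodes have capacity $1$. *)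

From HB Require Import structures.
From mathcomp Require Import all_boot all_order all_algebra.
Set Implicit Arguments. Unset Strict Implicit. Unset Printing Implicit Defensive.
Import Order.TTheory GRing.Theory Num.Theory.

(* A mixed graph on V = 'I_m : D w v means the directed edge w -> v,
   B v w means the bidirected edge v <-> w (symmetric, irreflexive). *)
Section MixedGraph.
Variable m : nat.
Variables (D B : rel 'I_m).

Definition pa (v : 'I_m) : {set 'I_m} := [set w | D w v].
Definition sib (v : 'I_m) : {set 'I_m} := [set w | B w v].

(* A half-trek with source y is encoded as (bi, h, p):
   - bi = true  : y <-> h -> p_1 -> ... -> p_r   (right side {h, p_1..p_r})
   - bi = false : h = y, y -> p_1 -> ... -> p_r  (right side {y, p_1..p_r})
   Left side is {y}; target is the last node; nodes may repeat. *)
Definition halftrek := (bool * 'I_m * seq 'I_m)%type.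
Definition ht_right (t : halftrek) : seq 'I_m := t.1.2 :: t.2.
Definition ht_target (t : halftrek) : 'I_m := last t.1.2 t.2.
Definition is_halftrek (y : 'I_m) (t : halftrek) : bool :=
  path D t.1.2 t.2 && (if t.1.1 then B y t.1.2 else t.1.2 == y).

Definition halftrek_system (X Y : {set 'I_m}) : Prop :=
  exists T : 'I_m -> halftrek,
    [/\ forall y, y \in X -> is_halftrek y (T y),
        {in X &, injective (fun y => ht_target (T y))},
        [set ht_target (T y) | y in X] = Y &
        forall y y', y \in X -> y' \in X -> y != y' ->
          [disjoint pred1 y & pred1 y'] /\
          [disjoint ht_right (T y) & ht_right (T y')]].

Definition HTC (Y : {set 'I_m}) (v : 'I_m) : Prop :=
  [/\ #|Y| = #|pa v|, Y :&: (v |: sib v) = set0 & halftrek_system Y (pa v)].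

Definition HTC_infinite_to_one : Prop :=
  forall Yf : 'I_m -> {set 'I_m},
    (exists v, ~ HTC (Yf v) v) \/
    (exists v w, [/\ v != w, v \in Yf w & w \in Yf v]).

(* Nodes: s, t, L{v,w} (encoded as the ordered
   pair (v,w) with v < w; pairs with v >= w or v <-> w in B are isolated dummy
   nodes without incident edges), and R_v(w) for all (v,w). *)
Definition fnode := ((unit + unit) + (('I_m * 'I_m) + ('I_m * 'I_m)))%type.
Definition fs : fnode := inl (inl tt).
Definition ft : fnode := inl (inr tt).
Definition fL (v w : 'I_m) : fnode := inr (inl (v, w)).
Definition fR (v w : 'I_m) : fnode := inr (inr (v, w)).

Definition L_valid (v w : 'I_m) : bool := (v < w)%N && ~~ B v w.

Definition fedge (x y : fnode) : bool :=
  match x, y with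
  | inl (inl _), inr (inl (v, w)) => L_valid v w                (* s -> L{v,w} *)
  | inr (inl (v, w)), inr (inr (a, b)) =>                        (* L{v,w} -> R_a(b) *)
      L_valid v w &&
      (((a == v) && ((b == w) || B w b)) || ((a == w) && ((b == v) || B v b)))
  | inr (inr (v, w)), inr (inr (a, u)) => (a == v) && D w u      (* R_v(w) -> R_v(u) *)
  | inr (inr (v, w)), inl (inr _) => w \in pa v                  (* R_v(w) -> t *)
  | _, _ => false
  end.

Local Open Scope ring_scope.

(* Flows: nonnegative, zero off edges (edge capacities are infinite),
   conservation at every node other than s,t with throughput <= 1. *)
Definition is_flow (R : realFieldType) (f : fnode -> fnode -> R) : Prop :=
  [/\ forall x y, 0 <= f x y,
      forall x y, ~~ fedge x y -> f x y = 0 &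
      forall x, x != fs -> x != ft ->
        (\sum_(u : fnode) f u x = \sum_(w : fnode) f x w) /\
        (\sum_(u : fnode) f u x <= 1)].

Definition flow_size (R : realFieldType) (f : fnode -> fnode -> R) : R :=
  \sum_(w : fnode) f fs w.

Definition is_max_flow (R : realFieldType) (f : fnode -> fnode -> R) : Prop :=
  is_flow f /\ forall g : fnode -> fnode -> R, is_flow g -> flow_size g <= flow_size f.

End MixedGraph.

From HB Require Import structures.
From mathcomp Require Import all_boot all_order all_algebra.
From Stdlib Require Import Classical.
Import Order.TTheory GRing.Theory Num.Theory.
Set Implicit Arguments. Unset Strict Implicit. Unset Printing Implicit Defensive.

(* A family (Y_v) with every Y_v satisfying the half-trek criterion for v and
   without reciprocal pairs exists iff G_flow contains |D| vertex-disjoint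
   walks from the out-neighbours of s to the in-neighbours of t.  Indeed a
   pair (v, y), y in Y_v, together with its half-trek y ... u_r (u_r a parent
   of v) gives the walk L{v,y} R_v(u_0) ... R_v(u_r); two such walks share an
   L-node only for a reciprocal pair, and an R_v-node only when two half-treks
   of the system for v meet on the right.  Conversely every such walk has this
   shape, so |D| disjoint walks decode into such a family.  As inner nodes have
   unit capacity, the maximum flow equals the maximum number of disjoint walks,
   which is at most |D| because the walks end at distinct in-neighbours of t. *)

Lemma ex_least (P : nat -> Prop) n : P n -> exists n0, P n0 /\ forall k, P k -> n0 <= k.
Proof.
elim: n {-2}n (leqnn n) => [|n IH] j hj Pj.
  by exists j; split => // k _; move: hj; rewrite leqn0 => /eqP ->.
case: (classic (exists k, k < j /\ P k)) => [[k [hk Pk]]|hno].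
  by apply: (IH k) => //; rewrite -ltnS (leq_trans hk hj).
by exists j; split => // k Pk; rewrite leqNgt; apply/negP => hk; apply: hno; exists k.
Qed.

Section Walks.
Variable N : finType.
Implicit Types (E : rel N) (A B S T X : {set N}) (w : N * seq N).

Definition verts w : seq N := w.1 :: w.2.

Definition ABwalk E A B w := [&& w.1 \in A, path E w.1 w.2 & last w.1 w.2 \in B].

Definition separator E A B S :=
  forall w, ABwalk E A B w -> exists2 z, z \in verts w & z \in S.

Definition linkage (I : finType) E A B (K : {set I}) (P : I -> N * seq N) :=
  (forall k, k \in K -> ABwalk E A B (P k)) /\
  (forall k k' z, k \in K -> k' \in K ->
     z \in verts (P k) -> z \in verts (P k') -> k = k').

Lemma ABwalkI E A B a q : a \in A -> path E a q -> last a q \in B -> ABwalk E A B (a, q).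
Proof. by rewrite /ABwalk /= => -> -> ->. Qed.

Lemma separator_has E A B S w : separator E A B S -> ABwalk E A B w -> has (mem S) (verts w).
Proof. by move=> hS /hS[z z1 z2]; apply/hasP; exists z. Qed.

(* Some separator has minimum size (B itself separates). *)
Lemma min_separator E A B :
  exists S, separator E A B S /\ forall T, separator E A B T -> #|S| <= #|T|.
Proof.
have sepB : separator E A B B.
  by move=> w /and3P[_ _ hl]; exists (last w.1 w.2); first exact: mem_last.
have [n [[S [hS <-]] hmin]] :=
  @ex_least (fun n => exists S, separator E A B S /\ #|S| = n) #|B|
           (ex_intro _ B (conj sepB erefl)).
by exists S; split => // T hT; apply: hmin; exists T.
Qed.

Lemma linkage_sub (I : finType) E A B (K : {set I}) P P' :
  linkage E A B K P -> (forall k, k \in K -> ABwalk E A B (P' k)) ->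
  (forall k, k \in K -> {subset verts (P' k) <= verts (P k)}) -> linkage E A B K P'.
Proof.
move=> [_ hd] hw' hs; split => // k k' z kK k'K z1 z2.
by apply: (hd k k' z) => //; [apply: hs z1 | apply: hs z2].
Qed.

Lemma linkage_uniq (I : finType) E A B (K : {set I}) P : linkage E A B K P ->
  exists P', linkage E A B K P' /\ forall k, k \in K -> uniq (verts (P' k)).
Proof.
move=> hP; pose P' k := ((P k).1, shorten (P k).1 (P k).2).
have hP' k : k \in K -> [/\ ABwalk E A B (P' k), uniq (verts (P' k)) &
                            {subset verts (P' k) <= verts (P k)}].
  move=> kK; have /and3P[] := hP.1 k kK; rewrite /P' /verts.
  case: (P k) => a q /= ha; case/shortenP => q' hq' hu hsub hl; split => //.
    exact: ABwalkI.
  by move=> z; rewrite !inE => /orP[->|/hsub ->]; rewrite ?orbT.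
exists P'; split; last by move=> k /hP'[].
by apply: linkage_sub hP _ _ => k /hP'[].
Qed.

Lemma linkage_onto_last (I : finType) E A B (K : {set I}) P :
  linkage E A B K P -> #|B| <= #|K| ->
  forall b, b \in B -> exists2 k, k \in K & last (P k).1 (P k).2 = b.
Proof.
move=> [hw hd] hK; pose l k := last (P k).1 (P k).2.
have inj : {in K &, injective l}.
  move=> k k' kK k'K e; apply: (hd k k' (l k)) => //; first exact: mem_last.
  by rewrite e; exact: mem_last.
have sub : l @: K \subset B by apply/subsetP => _ /imsetP[k kK ->]; case/and3P: (hw k kK).
have eq : l @: K = B by apply/eqP; rewrite eqEcard sub card_in_imset.
by move=> b; rewrite -eq => /imsetP[k kK ->]; exists k.
Qed.

Lemma linkage_onto_head (I : finType) E A B (K : {set I}) P :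
  linkage E A B K P -> #|A| <= #|K| -> forall a, a \in A -> exists2 k, k \in K & (P k).1 = a.
Proof.
move=> [hw hd] hK; pose h k := (P k).1.
have inj : {in K &, injective h}.
  move=> k k' kK k'K e; apply: (hd k k' (h k)) => //; first exact: mem_head.
  by rewrite e; exact: mem_head.
have sub : h @: K \subset A by apply/subsetP => _ /imsetP[k kK ->]; case/and3P: (hw k kK).
have eq : h @: K = A by apply/eqP; rewrite eqEcard sub card_in_imset.
by move=> a; rewrite -eq => /imsetP[k kK ->]; exists k.
Qed.

Lemma linkage_subrel (I : finType) E E' A B (K : {set I}) P :
  subrel E E' -> linkage E A B K P -> linkage E' A B K P.
Proof.
move=> sE [hw hd]; split=> // k /hw /and3P[ha hp hl].
by rewrite /ABwalk ha hl (sub_path sE hp).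
Qed.

Lemma trim_to_first E X a q : path E a q -> has (mem X) (a :: q) ->
  exists q', [/\ path E a q', last a q' \in X, {subset q' <= q} &
                 all (fun z => z \notin X) (belast a q')].
Proof.
elim: q a => [|b q IH] a /=; first by rewrite orbF => _ ha; exists [::].
move=> /andP[eab hp]; case ha: (a \in X) => /= hh; first by exists [::].
have [q' [h1 h2 h3 h4]] := IH b hp hh.
exists (b :: q'); split => /=; rewrite ?eab ?ha //.
by move=> z; rewrite !inE => /orP[->|/h3 ->]; rewrite ?orbT.
Qed.

Lemma trim_from_last E X a q : path E a q -> has (mem X) (a :: q) ->
  exists a' q', [/\ a' \in X, path E a' q', last a' q' = last a q,
                    {subset a' :: q' <= a :: q} & all (fun z => z \notin X) q'].
Proof.
elim: q a => [|b q IH] a /=; first by rewrite orbF => _ ha; exists a, [::]; split.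
move=> /andP[eab hp] hh; case hq: (has (mem X) (b :: q)).
  have [a' [q' [h1 h2 h3 h4 h5]]] := IH b hp hq.
  by exists a', q'; split => // z /h4; rewrite !inE => ->; rewrite orbT.
have ha : a \in X by move: hh; rewrite /= -/(has (mem X) (b :: q)) hq orbF.
exists a, (b :: q); split => //; first by rewrite /= eab.
by apply/allP => z zq; apply/negP => zX; move/negP: hq; apply; apply/hasP; exists z.
Qed.

Definition infan E A X (P : N -> N * seq N) := linkage E A X X P /\
  {in X, forall z, last (P z).1 (P z).2 = z /\ all (fun u => u \notin X) (belast (P z).1 (P z).2)}.

Definition outfan E X B (P : N -> N * seq N) := linkage E X B X P /\
  {in X, forall z, (P z).1 = z /\ all (fun u => u \notin X) (P z).2}.

(* #|X| disjoint A-X walks, each cut at its first visit of X and indexed by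
   its end, form a fan. *)
Lemma infan_of_linkage E A X (K : {set N}) P :
  linkage E A X K P -> #|X| <= #|K| -> exists P', infan E A X P'.
Proof.
move=> hP hK.
have /fin_all_exists[Q hQ] : forall k, exists w, k \in K ->
    [/\ ABwalk E A X w, {subset verts w <= verts (P k)} &
        all (fun z => z \notin X) (belast w.1 w.2)].
  move=> k; case: (boolP (k \in K)) => kK; last by exists (P k).
  have /and3P[ha hp hl] := hP.1 k kK.
  have hh : has (mem X) (verts (P k)).
    by apply/hasP; exists (last (P k).1 (P k).2); first exact: mem_last.
  have [q' [p1 p2 p3 p4]] := trim_to_first hp hh.
  exists ((P k).1, q') => _; split; first exact: ABwalkI.
    by move=> z; rewrite !inE => /orP[->|/p3 ->]; rewrite ?orbT.
  exact: p4.
have hQl : linkage E A X K Q by apply: linkage_sub hP _ _ => k /hQ[].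
have /fin_all_exists[g hg] : forall z, exists k, z \in X -> k \in K /\ last (Q k).1 (Q k).2 = z.
  move=> z; case: (boolP (z \in X)) => zX; last by exists z.
  by have [k ? ?] := linkage_onto_last hQl hK zX; exists k.
exists (Q \o g); split=> [|z zX /=]; last by have [gK ->] := hg z zX; case: (hQ _ gK).
split=> [z zX|z z' u zX z'X u1 u2]; first by have [/hQ[]] := hg z zX.
have [gK ez] := hg z zX; have [g'K ez'] := hg z' z'X.
by rewrite -ez -ez' (hQl.2 _ _ u gK g'K u1 u2).
Qed.

(* Symmetrically for walks starting in X, cut at their last visit of X. *)
Lemma outfan_of_linkage E X B (K : {set N}) P :
  linkage E X B K P -> #|X| <= #|K| -> exists P', outfan E X B P'.
Proof.
move=> hP hK.
have /fin_all_exists[Q hQ] : forall k, exists w, k \in K ->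
    [/\ ABwalk E X B w, {subset verts w <= verts (P k)} & all (fun z => z \notin X) w.2].
  move=> k; case: (boolP (k \in K)) => kK; last by exists (P k).
  have /and3P[ha hp hl] := hP.1 k kK.
  have hh : has (mem X) (verts (P k)) by rewrite /= ha.
  have [a' [q' [p1 p2 p3 p4 p5]]] := trim_from_last hp hh.
  by exists (a', q') => _; split => //; apply: ABwalkI; rewrite ?p3.
have hQl : linkage E X B K Q by apply: linkage_sub hP _ _ => k /hQ[].
have /fin_all_exists[g hg] : forall z, exists k, z \in X -> k \in K /\ (Q k).1 = z.
  move=> z; case: (boolP (z \in X)) => zX; last by exists z.
  by have [k ? ?] := linkage_onto_head hQl hK zX; exists k.
exists (Q \o g); split=> [|z zX /=]; last by have [gK ->] := hg z zX; case: (hQ _ gK).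
split=> [z zX|z z' u zX z'X u1 u2]; first by have [/hQ[]] := hg z zX.
have [gK ez] := hg z zX; have [g'K ez'] := hg z' z'X.
by rewrite -ez -ez' (hQl.2 _ _ u gK g'K u1 u2).
Qed.

End Walks.

Definition del_edge (N : finType) (E : rel N) (x y : N) : rel N :=
  [rel a b | E a b && ((a, b) != (x, y))].

Definition menger_holds (N : finType) (E : rel N) (A B : {set N}) :=
  exists S (K : {set N}) P, [/\ separator E A B S, linkage E A B K P & #|S| <= #|K|].

(* Goering's proof of Menger's theorem: removing an edge xy, a small
   separator S of the smaller graph yields the separators x+S and y+S of
   the full graph, and fans into x+S and out of y+S are glued along xy. *)
Section DeleteEdge.
Variables (N : finType) (E : rel N) (x y : N).
Hypothesis Exy : E x y.
Local Notation E' := (del_edge E x y).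
Implicit Types (A B S T X : {set N}).

Lemma del_edge_sub : subrel E' E.
Proof. by move=> a b /andP[]. Qed.

Lemma path_del_x a q : path E a q -> x \notin belast a q -> path E' a q.
Proof.
elim: q a => [|b q IH] a //= /andP[eab hp]; rewrite inE negb_or => /andP[xa xq].
by rewrite IH // andbT /del_edge /= eab; apply: contraNneq xa => -[->].
Qed.

Lemma path_del_y a q : path E a q -> y \notin q -> path E' a q.
Proof.
elim: q a => [|b q IH] a //= /andP[eab hp]; rewrite inE negb_or => /andP[yb yq].
by rewrite IH // andbT /del_edge /= eab; apply: contraNneq yb => -[_ ->].
Qed.

(* A walk of E that misses x (resp. y) is a walk of E', so adding x (resp. y)
   to a separator of E' gives a separator of E. *)
Lemma separator_addx A B S : separator E' A B S -> separator E A B (x |: S).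
Proof.
move=> hS [a q] hw; apply: NNPP => hno.
have /and3P[/= ha hp hl] := hw.
have hp' : path E' a q.
  apply: path_del_x hp _; apply/negP => /mem_belast xq; apply: hno.
  by exists x => //; rewrite /= setU11.
have [u u1 u2] := hS _ (ABwalkI ha hp' hl).
by apply: hno; exists u; rewrite // inE u2 orbT.
Qed.

Lemma separator_addy A B S : separator E' A B S -> separator E A B (y |: S).
Proof.
move=> hS [a q] hw; apply: NNPP => hno.
have /and3P[/= ha hp hl] := hw.
have hp' : path E' a q.
  apply: path_del_y hp _; apply/negP => yq; apply: hno.
  by exists y => //=; rewrite ?setU11 // inE yq orbT.
have [u u1 u2] := hS _ (ABwalkI ha hp' hl).
by apply: hno; exists u; rewrite // inE u2 orbT.
Qed.

(* If X (containing x) separates A from B in E, a separator of A from X in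
   E' separates A from B in E: cut each walk at its first visit of X. *)
Lemma separator_before A B X T :
  x \in X -> separator E A B X -> separator E' A X T -> separator E A B T.
Proof.
move=> xX hX hT [a q] hw; have hh := separator_has hX hw; have /and3P[ha hp _] := hw.
have [q' [p1 p2 p3 p4]] := trim_to_first hp hh.
have hp' : path E' a q'.
  by apply: path_del_x p1 _; apply/negP => /(allP p4); rewrite xX.
have [u u1 u2] := hT _ (ABwalkI ha hp' p2).
by exists u => //; move: u1; rewrite !inE => /orP[->|/p3 ->]; rewrite ?orbT.
Qed.

Lemma separator_after A B X T :
  y \in X -> separator E A B X -> separator E' X B T -> separator E A B T.
Proof.
move=> yX hX hT [a q] hw; have hh := separator_has hX hw; have /and3P[_ hp hl] := hw.
have [a' [q' [p1 p2 p3 p4 p5]]] := trim_from_last hp hh.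
have hp' : path E' a' q' by apply: path_del_y p2 _; apply/negP => /(allP p5); rewrite yX.
have [u u1 u2] : exists2 u, u \in verts (a', q') & u \in T.
  by apply: hT; apply: ABwalkI; rewrite ?p3.
by exists u => //; apply: p4.
Qed.

Section Glue.
Variables (A B S : {set N}) (P1 P2 : N -> N * seq N).
Hypotheses (sepS : separator E' A B S) (xS : x \notin S) (yS : y \notin S).
Hypotheses (fan1 : infan E' A (x |: S) P1) (fan2 : outfan E' (y |: S) B P2).

(* A walk of the first fan and a walk of the second one can only meet at
   their common end, which lies in S: otherwise splicing them gives an
   A-B walk of E' avoiding S. *)
Lemma fans_meet k1 k2 v : k1 \in x |: S -> k2 \in y |: S ->
  v \in verts (P1 k1) -> v \in verts (P2 k2) -> [/\ v \in S, v = k1 & v = k2].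
Proof.
move=> k1X k2X v1 v2; have [[/(_ k1 k1X) hw1 _] /(_ k1 k1X) [hl1 hb1]] := fan1.
have [[/(_ k2 k2X) hw2 _] /(_ k2 k2X) [hh2 hb2]] := fan2.
suff : [/\ v \in S, v = last (P1 k1).1 (P1 k1).2 & v = (P2 k2).1] by rewrite hl1 hh2.
move: hw1 hb1 hw2 hb2 v1 v2; rewrite /verts.
case: (P1 k1) => a q1; case: (P2 k2) => b q2 /= /and3P[ha hp1 _] hb1 /and3P[_ hp2 hl2] hb2 v1 v2.
have vS : v \in S.
  move: (v1) hp1 hb1 => /splitPl [p1 p2 lp1].
  rewrite cat_path belast_cat all_cat => /andP[hp1a _] /andP[hb1a _].
  move: (v2) hp2 hb2 hl2 => /splitPl [r1 r2 lr1].
  rewrite cat_path all_cat last_cat => /andP[_ hp2b] /andP[_ hb2b] hl2.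
  rewrite /= lr1 in hp2b hl2.
  have hw : ABwalk E' A B (a, p1 ++ r2).
    by apply: ABwalkI ha _ _; rewrite ?cat_path ?hp1a ?lp1 // last_cat lp1.
  have [u u1 u2] := sepS hw.
  move: u1; rewrite /verts /= -cat_cons mem_cat (lastI a p1) mem_rcons inE lp1.
  case/orP => [/orP[/eqP <- //|ub]|ur2].
    by move: (allP hb1a u ub); rewrite !inE u2 orbT.
  by move: (allP hb2b u ur2); rewrite !inE u2 orbT.
split=> //.
  move: v1; rewrite (lastI a q1) mem_rcons inE => /orP[/eqP //|vb].
  by move: (allP hb1 v vb); rewrite !inE vS orbT.
move: v2; rewrite inE => /orP[/eqP //| vq].
by move: (allP hb2 v vq); rewrite !inE vS orbT.
Qed.

Definition glue_target z := if z == x then y else z.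

Definition glued z : N * seq N :=
  let w := P2 (glue_target z) in ((P1 z).1, (P1 z).2 ++ (if z == x then verts w else w.2)).

Lemma glue_target_mem z : z \in x |: S -> glue_target z \in y |: S.
Proof.
rewrite /glue_target !inE; case: eqP => [_|_]; rewrite ?eqxx //=.
by move=> ->; rewrite orbT.
Qed.

Lemma glued_walk z : z \in x |: S -> ABwalk E A B (glued z).
Proof.
move=> zX; have [[/(_ z zX) hw1 _] /(_ z zX) [hl1 _]] := fan1.
have zX2 := glue_target_mem zX.
have [[/(_ _ zX2) hw2 _] /(_ _ zX2) [hh2 _]] := fan2.
rewrite /glued; move: hw1 hl1 hw2 hh2.
case: (P1 z) => a q1; case: (P2 (glue_target z)) => b q2 /=.
move=> /and3P[ha hp1 _] hl1 /and3P[_ hp2 hl2] hb.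
have hp1E : path E a q1 := sub_path del_edge_sub hp1.
have hp2E : path E b q2 := sub_path del_edge_sub hp2.
rewrite /glue_target in hb; case: eqP hb => [zx hb | _ hb]; apply: ABwalkI => //.
- by rewrite cat_path hp1E hl1 zx hb /= Exy -hb.
- by rewrite last_cat.
- by rewrite cat_path hp1E hl1 -hb.
- by rewrite last_cat hl1 -hb.
Qed.

(* glue_target is the identity on S and injective on x+S, as y is not in S. *)
Lemma glue_target_S z : z \in x |: S -> glue_target z \in S -> glue_target z = z.
Proof. by rewrite /glue_target; case: eqP => // _ _; rewrite (negbTE yS). Qed.

Lemma glue_target_inj : {in x |: S &, injective glue_target}.
Proof.
move=> z z' zX z'X e.
have [zS|] := boolP (glue_target z \in S).
  by rewrite -(glue_target_S zX zS) e glue_target_S // -e.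
move: zX z'X e; rewrite /glue_target !inE.
case: eqP => [->|_]; case: eqP => [->|_] //=.
  by move=> _ z'S yz'; rewrite -yz' (negbTE yS) in z'S.
by move=> ->.
Qed.

Lemma glue_fans : linkage E A B (x |: S) glued.
Proof.
split=> [|z z' u zX z'X]; first exact: glued_walk.
have mem_glued w : u \in verts (glued w) -> u \in verts (P1 w) \/ u \in verts (P2 (glue_target w)).
  rewrite /verts /glued /= -cat_cons mem_cat => /orP[h|h]; [by left|right].
  by move: h; case: ifP => // _ h; rewrite inE h orbT.
have [[_ hd1] _] := fan1; have [[_ hd2] _] := fan2.
move=> /mem_glued[h1|h1] /mem_glued[h2|h2].
- exact: (hd1 _ _ _ zX z'X h1 h2).
- have [uS e1 e2] := fans_meet zX (glue_target_mem z'X) h1 h2.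
  by rewrite -e1 e2 glue_target_S // -e2.
- have [uS e1 e2] := fans_meet z'X (glue_target_mem zX) h2 h1.
  by rewrite -e1 e2 glue_target_S // -e2.
- apply: glue_target_inj => //.
  exact: hd2 _ _ _ (glue_target_mem zX) (glue_target_mem z'X) h1 h2.
Qed.

End Glue.

Lemma menger_step A B : (forall A B, menger_holds E' A B) -> menger_holds E A B.
Proof.
move=> IH; have [S [K [P [sepS linkP cS]]]] := IH A B.
have [S0 [sepS0 minS0]] := min_separator E A B.
case: (leqP #|S0| #|K|) => hlt.
  by exists S0, K, P; split=> //; apply: linkage_subrel linkP; apply: del_edge_sub.
have ltS : #|S| < #|S0| := leq_ltn_trans cS hlt.
have sepX1 := separator_addx sepS; have sepX2 := separator_addy sepS.
have card_add z : separator E A B (z |: S) -> z \notin S /\ #|z |: S| = #|S0|.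
  move=> hz; have := minS0 _ hz; rewrite cardsU1.
  case: (boolP (z \in S)) => zS /=; first by rewrite add0n leqNgt ltS.
  by move=> h; split=> //; apply/eqP; rewrite eqn_leq h add1n ltS.
have [xS cX1] := card_add _ sepX1; have [yS cX2] := card_add _ sepX2.
have [T1 [K1 [Q1 [sepT1 link1 cT1]]]] := IH A (x |: S).
have [T2 [K2 [Q2 [sepT2 link2 cT2]]]] := IH (y |: S) B.
have [P1 fan1] : exists P1, infan E' A (x |: S) P1.
  apply: infan_of_linkage link1 _; rewrite cX1 (leq_trans _ cT1) //.
  by apply: minS0; apply: separator_before sepX1 sepT1; rewrite setU11.
have [P2 fan2] : exists P2, outfan E' (y |: S) B P2.
  apply: outfan_of_linkage link2 _; rewrite cX2 (leq_trans _ cT2) //.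
  by apply: minS0; apply: separator_after sepX2 sepT2; rewrite setU11.
by exists (x |: S), (x |: S), (glued P1 P2); split => //; apply: glue_fans.
Qed.

End DeleteEdge.

Definition edges (N : finType) (E : rel N) := [set p : N * N | E p.1 p.2].

Lemma edges_del (N : finType) (E : rel N) x y :
  edges (del_edge E x y) = edges E :\ (x, y).
Proof. by apply/setP => -[a b]; rewrite !inE andbC. Qed.

(* Without edges, the walks are single vertices of A :&: B. *)
Lemma menger_edgeless (N : finType) (E : rel N) A B : edges E = set0 -> menger_holds E A B.
Proof.
move=> E0; exists (A :&: B), (A :&: B), (fun z => (z, [::])); split=> //; last first.
  split=> [k|k k' z _ _]; last by rewrite !inE => /eqP-> /eqP.
  by rewrite inE => /andP[ha hb]; apply: ABwalkI.
move=> [a [|b q]] /and3P[/= ha hp hb]; first by exists a; rewrite ?inE ?ha ?mem_head.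
by move: hp => /= /andP[eab _]; move/setP: E0 => /(_ (a, b)); rewrite !inE eab.
Qed.

Theorem menger (N : finType) (E : rel N) A B : menger_holds E A B.
Proof.
move: {2}#|edges E| (leqnn #|edges E|) => n; elim: n E A B => [|n IH] E A B hE.
  by apply: menger_edgeless; apply: cards0_eq; move: hE; rewrite leqn0 => /eqP.
case: (set_0Vmem (edges E)) => [|[[x y] exy]]; first exact: menger_edgeless.
apply: (menger_step (x := x) (y := y)) => [|A' B']; first by rewrite inE in exy.
apply: IH; rewrite edges_del -ltnS (leq_trans _ hE) //.
by rewrite (cardsD1 (x, y) (edges E)) exy.
Qed.

Section UnitFlow.
Variables (N : finType) (e : rel N) (s t : N).
Hypotheses (no_in_s : forall x, ~~ e x s) (no_out_t : forall y, ~~ e t y).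
Hypotheses (no_st : ~~ e s t) (s_neq_t : s != t).
Local Notation A := [set a | e s a].
Local Notation B := [set b | e b t].

Lemma path_has_pred a q z : path e a q -> z \in q -> exists x, e x z.
Proof.
elim: q a => [|b q IH] a //= /andP[eab hq]; rewrite inE => /orP[/eqP ->|zq].
  by exists a.
exact: IH hq zq.
Qed.

Lemma path_sink a q z : path e a q -> z \in a :: q -> (forall y, ~~ e z y) -> z = last a q.
Proof.
elim: q a => [|b q IH] a /=; first by rewrite inE => _ /eqP.
move=> /andP[eab hq]; rewrite inE => /orP[/eqP za|zq] hz; last exact: IH hq zq hz.
by move: (hz b); rewrite za eab.
Qed.

Lemma ABwalk_inner w : ABwalk e A B w -> s \notin verts w /\ t \notin verts w.
Proof.
case: w => a q /and3P[ha hp hl]; rewrite /= !inE in ha hl; split.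
  rewrite /verts /= inE negb_or; apply/andP; split.
    by apply: contraTneq ha => <-; rewrite (negbTE (no_in_s s)).
  by apply/negP => /(path_has_pred hp)[x]; rewrite (negbTE (no_in_s x)).
apply/negP => /(path_sink hp) => /(_ no_out_t) tl.
by move: hl; rewrite -tl (negbTE (no_out_t t)).
Qed.

Lemma separator_inner (S : {set N}) : separator e A B S -> separator e A B (S :\ s :\ t).
Proof.
move=> hS w hw; have [z z1 z2] := hS w hw; have [ns nt] := ABwalk_inner hw.
exists z; rewrite // !inE z2 andbT.
by apply/andP; split; [apply: contraNneq nt => <- | apply: contraNneq ns => <-].
Qed.

Definition reach (S : {set N}) := [set z | connect [rel a b | e a b && (b \notin S)] s z].

Lemma reach_s (S : {set N}) : s \in reach S.
Proof. by rewrite inE connect0. Qed.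

Lemma reach_exit (S : {set N}) z w : z \in reach S -> w \notin reach S -> e z w -> w \in S.
Proof.
rewrite !inE => zZ wZ ezw; apply: contraNT wZ => wS.
by apply: connect_trans zZ (connect1 _); rewrite /= ezw.
Qed.

Lemma reach_t (S : {set N}) : separator e A B S -> t \notin reach S.
Proof.
move=> hS; rewrite inE; apply/negP => /connectP [p hp tl].
case/lastP: p hp tl => [|p lt]; first by move=> _ ts; move: s_neq_t; rewrite ts eqxx.
rewrite last_rcons rcons_path => /andP[hp hlt] tl; rewrite -tl in hlt.
case: p hp hlt => [|a q] /=; first by move=> _ /andP[h _]; move: no_st; rewrite h.
move=> /andP[/andP[ha haS] hq] /andP[hl _].
have hq' : path e a q by apply: sub_path hq => x y /andP[].
have hw : ABwalk e A B (a, q) by apply: ABwalkI; rewrite ?inE.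
have [z z1 z2] := hS _ hw.
move: z1; rewrite /verts /= inE => /orP[/eqP za|zq]; first by rewrite -za z2 in haS.
have : all (fun y => y \notin S) q.
  by elim: q a hq {hq' hl hw ha haS zq} => //= b q IH a /andP[/andP[_ ->] /IH].
by move/allP => /(_ z zq); rewrite z2.
Qed.

Variable R : realFieldType.
Local Open Scope ring_scope.

Definition unit_flow (f : N -> N -> R) : Prop :=
  [/\ forall x y, 0 <= f x y, forall x y, ~~ e x y -> f x y = 0 &
      forall x, x != s -> x != t ->
        (\sum_(u : N) f u x = \sum_(w : N) f x w) /\ (\sum_(u : N) f u x <= 1)].

Definition flow_value (f : N -> N -> R) := \sum_(w : N) f s w.

Lemma flow_cut f (Z : {set N}) : unit_flow f -> s \in Z -> t \notin Z ->
  flow_value f = \sum_(z in Z) \sum_(w | w \notin Z) f z w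
                 - \sum_(z in Z) \sum_(u | u \notin Z) f u z.
Proof.
move=> [_ fe fc] sZ tZ.
transitivity (\sum_(z in Z) (\sum_(w : N) f z w - \sum_(u : N) f u z)).
  have in_s : \sum_(u : N) f u s = 0 by rewrite big1 // => u _; exact: fe.
  rewrite [RHS](bigD1 s) //= in_s subr0 [X in _ + X]big1 ?addr0 // => z /andP[zZ zs].
  have zt : z != t by apply: contraNneq tZ => <-.
  by have [-> _] := fc z zs zt; rewrite subrr.
rewrite sumrB (eq_bigr (fun z => \sum_(w in Z) f z w + \sum_(w | w \notin Z) f z w)); last first.
  by move=> z _; rewrite (bigID (mem Z)).
rewrite [X in _ - X](eq_bigr (fun z => \sum_(u in Z) f u z + \sum_(u | u \notin Z) f u z));
  last first.
  by move=> z _; rewrite (bigID (mem Z)).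
rewrite !big_split /= (exchange_big _ _ _ (mem Z) (mem Z)) /=.
by rewrite opprD addrACA subrr add0r.
Qed.

(* Cut at the set Z of vertices reachable from s without entering S: all the
   flow leaving Z enters inner vertices of S, each of which carries at most 1. *)
Lemma flow_le_separator f (S : {set N}) :
  unit_flow f -> separator e A B S -> flow_value f <= #|S|%:R.
Proof.
move=> hf hS; have [f0 fe fc] := hf.
set S2 := S :\ s :\ t; set Z := reach S2.
have hS2 := separator_inner hS; have tZ := reach_t hS2.
rewrite (flow_cut hf (reach_s S2) tZ) lerBlDr.
apply: le_trans (_ : \sum_(z in Z) \sum_(w in S2) f z w <= _).
  apply: ler_sum => z zZ; rewrite [X in X <= _]big_mkcond [X in _ <= X]big_mkcond.
  apply: ler_sum => w _; case: ifP => wZ; case: ifP => wS //.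
  rewrite fe //; apply: contraFN wS => ezw; exact: reach_exit zZ wZ ezw.
apply: ler_wpDr; first by apply: sumr_ge0 => z _; apply: sumr_ge0.
rewrite exchange_big /=; apply: le_trans (_ : \sum_(w in S2) \sum_(u : N) f u w <= _).
  apply: ler_sum => w _; rewrite [X in _ <= X](bigID (mem Z)) /= lerDl.
  by apply: sumr_ge0.
apply: le_trans (_ : \sum_(w in S2) 1 <= _).
  by apply: ler_sum => w; rewrite !inE => /and3P[wt ws _]; have [_ ->] := fc w ws wt.
rewrite sumr_const ler_nat; apply: subset_leq_card.
by apply/subsetP => z; rewrite !inE => /and3P[].
Qed.

Lemma sum_indicator (b : bool) (n : N) : \sum_(w : N) (b && (n == w))%:R = b%:R :> R.
Proof.
rewrite (bigD1 n) //= eqxx andbT big1 ?addr0 // => w /negbTE nw.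
by rewrite eq_sym nw andbF.
Qed.

(* A route is a walk closed up by the source and the sink; a unit of flow
   travels along it, from each vertex to its successor. *)
Definition route_step (c : seq N) x y : bool := [&& x \in c, x != t & next c x == y].

Section Route.
Variable p : seq N.
Local Notation c := (s :: rcons p t).
Hypothesis c_uniq : uniq c.

Lemma next_route_sink : next c t = s.
Proof.
have : (s \notin rcons p t) && uniq (rcons p t) by [].
rewrite mem_rcons inE negb_or rcons_uniq => /andP[/andP[hst _] /andP[htp _]].
have tc : t \in c by rewrite inE mem_rcons inE eqxx !orbT.
rewrite next_nth tc.
have -> : index t c = (size p).+1.
  rewrite -cat1s index_cat inE eq_sym (negbTE hst) -cats1 index_cat (negbTE htp) /=.
  by rewrite eqxx addn0.
by rewrite /= nth_default // size_rcons.
Qed.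

Lemma route_out x : \sum_(y : N) (route_step c x y)%:R = ((x \in c) && (x != t))%:R :> R.
Proof.
by rewrite -(sum_indicator _ (next c x)); apply: eq_bigr => y _; rewrite /route_step andbA.
Qed.

Lemma route_in x : x != s -> \sum_(u : N) (route_step c u x)%:R = (x \in c)%:R :> R.
Proof.
move=> xs; rewrite -[RHS](sum_indicator _ (prev c x)); apply: eq_bigr => u _.
congr ((nat_of_bool _)%:R); apply/idP/idP.
  by case/and3P => uc ut /eqP <-; rewrite mem_next uc (prev_next c_uniq) eqxx.
case/andP => xc /eqP <-; rewrite /route_step mem_prev xc (next_prev c_uniq) eqxx andbT.
by apply: contraNneq xs => pt; rewrite -(next_prev c_uniq x) pt next_route_sink.
Qed.

Lemma route_edge x y : path e s (rcons p t) -> route_step c x y -> e x y.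
Proof.
move=> hp /and3P[xc xt /eqP <-].
pose e' := [rel a b | e a b || ((a == t) && (b == s))].
have cyc : cycle e' c.
  rewrite /cycle rcons_path last_rcons /= !eqxx orbT andbT.
  by apply: sub_path hp => a b /= ->.
by have := next_cycle cyc xc; rewrite /= (negbTE xt) orbF.
Qed.

End Route.

(* A linkage of K disjoint A-B walks carries a flow of value #|K|: f x y counts
   the routes s :: walk :: t stepping from x to y; disjointness of the walks
   bounds the flow through each inner vertex by 1. *)
Lemma linkage_flow (I : finType) (K : {set I}) W :
  linkage e A B K W -> exists f, unit_flow f /\ flow_value f = #|K|%:R.
Proof.
move=> /linkage_uniq[W' [[hw hd] hu]].
pose route i := s :: rcons (verts (W' i)) t.
have route_uniq i : i \in K -> uniq (route i).
  move=> iK; have [ns nt] := ABwalk_inner (hw i iK).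
  by rewrite /route cons_uniq mem_rcons inE negb_or s_neq_t ns rcons_uniq nt hu.
have route_path i : i \in K -> path e s (rcons (verts (W' i)) t).
  move=> iK; have := hw i iK; rewrite /verts; case: (W' i) => a q /and3P[ha hp hl].
  by rewrite rcons_path /=; rewrite !inE in ha hl; rewrite ha hp hl.
have route_inner i x : x != s -> x != t -> (x \in route i) = (x \in verts (W' i)).
  by move=> xs xt; rewrite /route inE mem_rcons inE (negbTE xs) (negbTE xt).
pose f x y := \sum_(i in K) (route_step (route i) x y)%:R : R.
exists f; split; last first.
  rewrite /flow_value /f exchange_big /= (eq_bigr (fun _ => 1)) ?sumr_const // => i iK.
  by rewrite route_out ?route_uniq // mem_head s_neq_t.
split=> [x y|x y nexy|x xs xt].
- by apply: sumr_ge0 => i _; apply: ler0n.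
- apply: big1 => i iK; case: (boolP (route_step _ x y)) => // /(route_edge (route_path i iK)) exy.
  by rewrite exy in nexy.
have -> : \sum_(u : N) f u x = \sum_(i in K) (x \in route i)%:R.
  by rewrite /f exchange_big; apply: eq_bigr => i iK; rewrite route_in ?route_uniq.
have -> : \sum_(w : N) f x w = \sum_(i in K) (x \in route i)%:R.
  by rewrite /f exchange_big; apply: eq_bigr => i iK; rewrite route_out ?route_uniq // xt andbT.
split=> //; case: (pickP (fun i => (i \in K) && (x \in route i))) => [i0 /andP[i0K xi0] | none].
  rewrite (bigD1 i0) //= big1 ?addr0 ?xi0 // => j /andP[jK ji0].
  case: (boolP (x \in route j)) => // xj; case/negP: ji0; apply/eqP.
  by apply: (hd j i0 x) => //; rewrite -route_inner.
by rewrite big1 ?ler01 // => i iK; move: (none i); rewrite iK /= => ->.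
Qed.

Theorem unit_maxflow : exists (K : {set N}) P f,
  [/\ linkage e A B K P, unit_flow f, flow_value f = #|K|%:R &
      forall g, unit_flow g -> flow_value g <= #|K|%:R].
Proof.
have [S [K [P [sepS linkP cSK]]]] := menger e A B.
have [f [hf vf]] := linkage_flow linkP.
exists K, P, f; split=> // g hg.
by apply: le_trans (flow_le_separator hg sepS) _; rewrite ler_nat.
Qed.

End UnitFlow.

Lemma card_pairs (T : finType) (F : T -> {set T}) :
  #|[set p : T * T | p.2 \in F p.1]| = \sum_(v : T) #|F v|.
Proof.
rewrite -sum1_card (eq_bigr (fun v => \sum_(w in F v) 1)); last by move=> v _; rewrite sum1_card.
by rewrite pair_big_dep /=; apply: eq_bigl => p; rewrite inE.
Qed.

(* The network G_flow of a mixed graph (V, D, B): As are the nodes L{v,w}, Bs the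
   nodes R_v(w) with w a parent of v. *)
Section FlowNetwork.
Variables (m : nat) (D B : rel 'I_m).
Hypothesis B_sym : symmetric B.
Local Notation N := (fnode m).
Local Notation E := (fedge D B).
Local Notation As := [set a : N | fedge D B (fs m) a].
Local Notation Bs := [set b : N | fedge D B b (ft m)].

Lemma fedge_to_s x : ~~ E x (fs m).
Proof. by case: x => [[[]|[]]|[[v w]|[v w]]]. Qed.

Lemma fedge_from_t y : ~~ E (ft m) y.
Proof. by case: y => [[[]|[]]|[[v w]|[v w]]]. Qed.

Lemma fedge_s_t : ~~ E (fs m) (ft m).
Proof. by []. Qed.

Lemma fs_neq_ft : fs m != ft m.
Proof. by []. Qed.

Definition Lnode (v y : 'I_m) : N := if (v < y)%N then fL v y else fL y v.

Lemma Lnode_inj v y v' y' : Lnode v y = Lnode v' y' ->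
  (v = v' /\ y = y') \/ (v = y' /\ y = v').
Proof. by rewrite /Lnode; do 2 case: ifP => _; case=> -> ->; auto. Qed.

Lemma Lnode_sym v y : v != y -> Lnode v y = Lnode y v.
Proof. by rewrite /Lnode => vy; case: ltngtP => // /val_inj e; rewrite e eqxx in vy. Qed.

Lemma fedge_s_Lnode v y : v != y -> ~~ B y v -> E (fs m) (Lnode v y).
Proof.
rewrite /Lnode => vy nb; case: ltngtP => [lt|lt|/val_inj e] /=.
- by rewrite /L_valid lt B_sym nb.
- by rewrite /L_valid lt nb.
- by rewrite e eqxx in vy.
Qed.

Lemma fedge_Lnode_R v y h :
  v != y -> ~~ B y v -> (h == y) || B y h -> E (Lnode v y) (fR v h).
Proof.
move=> vy nb hc; have := fedge_s_Lnode vy nb; rewrite /Lnode.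
by case: ltngtP => [lt|lt|/val_inj e] /= ->; rewrite /= ?eqxx /= ?hc ?orbT.
Qed.

Lemma path_fR v h p : path E (fR v h) (map (fR v) p) = path D h p.
Proof. by elim: p h => //= a p IH h; rewrite IH eqxx. Qed.

Lemma card_sink_nbrs : #|Bs| = \sum_(v : 'I_m) #|pa D v|.
Proof.
rewrite -card_pairs -(card_in_imset (f := fun p : 'I_m * 'I_m => fR p.1 p.2)); last first.
  by move=> [a b] [c d] _ _ [-> ->].
apply: eq_card => x; rewrite inE.
case: x => [[[]|[]]|[[a b]|[v w]]] /=;
  try by apply/esym/negbTE/negP => /imsetP [p _ e]; discriminate e.
apply/idP/imsetP => [hw|[p]]; first by exists (v, w) => //; rewrite in_set.
by rewrite in_set => hp [-> ->].
Qed.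

Definition trek_walk (v y : 'I_m) (T : halftrek m) : N * seq N :=
  (Lnode v y, map (fR v) (ht_right T)).

Definition trek_ok (v y : 'I_m) (T : halftrek m) : Prop :=
  [/\ v != y, ~~ B y v, is_halftrek D B y T & ht_target T \in pa D v].

Lemma trek_walkP v y T : trek_ok v y T -> ABwalk E As Bs (trek_walk v y T).
Proof.
case=> vy nb; case: T => [[bi h] p]; rewrite /is_halftrek /ht_target /= => /andP[hp hb] hl.
apply: ABwalkI; first by rewrite inE; exact: fedge_s_Lnode.
  rewrite /= path_fR hp andbT; apply: fedge_Lnode_R => //.
  by move: hb; case: bi => [->|/eqP ->]; rewrite ?orbT ?eqxx.
by rewrite inE /= last_map.
Qed.

(* A walk determines its half-trek up to the type of its first edge. *)
Lemma trek_walk_inj v y T v' y' T' :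
  v != y -> trek_walk v y T = trek_walk v' y' T' ->
  [/\ v = v', y = y' & ht_right T = ht_right T'].
Proof.
have fR_inj u : injective (@fR m u) by move=> a b [].
rewrite /trek_walk /ht_right => vy [hL]; case: T T' => [[bi h] p] [[bi' h'] p'] /= [ev eh].
subst v' h' => /(inj_map (fR_inj v)) ->; split=> //.
by case: (Lnode_inj hL) => [[_ //]|[_ e]]; rewrite e eqxx in vy.
Qed.

Lemma path_to_sink v h q : path E (fR v h) q -> E (last (fR v h) q) (ft m) ->
  exists p, q = map (fR v) p /\ path D h p.
Proof.
elim: q h => [|r q IH] h /=; first by exists [::].
case: r => [[[]|[]]|[[a b]|[a u]]] //=; first by case/andP=> _; case: q {IH}.
move=> /andP[/andP[/eqP av du] hq] hl; subst a.
by have [p [-> hp]] := IH u hq hl; exists (u :: p); rewrite /= du hp.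
Qed.

Definition Rsnd (x : N) (d : 'I_m) : 'I_m := if x is inr (inr (_, w)) then w else d.

Definition decode (w : N * seq N) : option ('I_m * 'I_m * halftrek m) :=
  match w with
  | (inr (inl (a, b)), inr (inr (v, h)) :: q) =>
      let y := if a == v then b else a in Some (v, y, (h != y, h, map (Rsnd ^~ h) q))
  | _ => None
  end.

Lemma decodeP w : ABwalk E As Bs w ->
  exists v y T, [/\ decode w = Some (v, y, T), w = trek_walk v y T & trek_ok v y T].
Proof.
case: w => a q /and3P[ha hp hl]; rewrite /= !inE in ha hp hl.
case: a ha hp hl => [[[]|[]]|[[v1 v2]|[x y]]] //= /andP[lt nb].
case: q => [|r q] //=; case: r => [[[]|[]]|[[a b]|[v h]]] //=; rewrite /L_valid lt nb /=.
move=> /andP[hc /path_to_sink hq] /[dup] /hq[p [-> hp]]; rewrite last_map => hl.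
have vRp : map (Rsnd ^~ h) (map (fR v) p) = p by elim: p {hp hl hq} => //= u p ->.
have n12 : v1 != v2 by apply: contraTneq lt => ->; rewrite ltnn.
set y := if v1 == v then v2 else v1.
have [Ly vy nBy hy] : [/\ Lnode v y = fL v1 v2, v != y, ~~ B y v & (h == y) || B y h].
  rewrite /y /Lnode; case: (v1 =P v) => [ev|/eqP nv1]; first subst v.
    rewrite lt B_sym nb; split=> //; case/orP: hc => /andP[/eqP e hc] //.
    by rewrite e eqxx in n12.
  move: hc; rewrite eq_sym (negbTE nv1) /= => /andP[/eqP ev hc]; subst v.
  by rewrite ltnNge (ltnW lt).
exists v, y, (h != y, h, p); split; first by rewrite vRp.
  by rewrite /trek_walk /ht_right /= Ly.
split=> //; rewrite /is_halftrek /= hp /=.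
by case: eqP hy => //= _ ->.
Qed.

Lemma mem_trek_walk z v y T :
  z \in verts (trek_walk v y T) = (z == Lnode v y) || (z \in map (fR v) (ht_right T)).
Proof. by rewrite inE. Qed.

Lemma fR_neq_Lnode a b v y : fR a b <> Lnode v y.
Proof. by rewrite /Lnode; case: ifP. Qed.

Lemma ht_target_mem (T : halftrek m) : ht_target T \in ht_right T.
Proof. exact: mem_last. Qed.

Lemma ht_target_right (T T' : halftrek m) :
  ht_right T = ht_right T' -> ht_target T = ht_target T'.
Proof. by case: T T' => [[? h] p] [[? h'] p'] [-> ->]. Qed.

(* An HTC family without reciprocal pairs gives one walk per pair (v, y)
   with y in Yf v, and these walks are disjoint: they meet in an L-node only
   for reciprocal pairs, and in an R_v-node only for intersecting half-treks
   of the system for v. *)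
Lemma family_linkage (Yf : 'I_m -> {set 'I_m}) :
  (forall v, HTC D B (Yf v) v) -> ~ (exists v w, [/\ v != w, v \in Yf w & w \in Yf v]) ->
  exists W, linkage E As Bs [set k : 'I_m * 'I_m | k.2 \in Yf k.1] W.
Proof.
move=> hH hnr.
have /fin_all_exists[Tv hTv] v : halftrek_system D B (Yf v) (pa D v) by case: (hH v).
have ok v y : y \in Yf v -> trek_ok v y (Tv v y).
  move=> hy; have [ht _ img _] := hTv v; split; last by rewrite -img imset_f.
  - by case: (hH v) => _ /setP /(_ y); rewrite !inE hy eq_sym; case: eqP.
  - by case: (hH v) => _ /setP /(_ y); rewrite !inE hy; case: (B y v); rewrite ?orbT.
  - exact: ht.
exists (fun k => trek_walk k.1 k.2 (Tv k.1 k.2)); split=> [[v y]|[v y] [v' y'] z].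
  by rewrite inE => /ok /trek_walkP.
rewrite inE => hy; rewrite inE => hy'; rewrite /= !mem_trek_walk.
case/orP=> [/eqP -> | /mapP [a ha ->]]; case/orP=> [/eqP | /mapP [a' ha']].
- case/Lnode_inj=> [[-> ->] // | [e1 e2]]; subst v' y'.
  by case: hnr; exists v, y; split=> //; case: (ok v y hy).
- by move=> e; case: (fR_neq_Lnode (esym e)).
- by move=> e; case: (fR_neq_Lnode e).
case=> ev ea; subst v' a'; case: (y =P y') => [-> //| /eqP yy'].
have [_ _ _ disj] := hTv v; have [_] := disj y y' hy hy' yy'.
by rewrite disjoint_has => /hasPn /(_ a ha); rewrite ha'.
Qed.

Section Decode.
Variables (K : {set N}) (P : N -> N * seq N).
Hypotheses (linkP : linkage E As Bs K P) (cardK : #|Bs| <= #|K|).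

Definition labelled (v y : 'I_m) (w : N * seq N) : bool :=
  if decode w is Some (v', y', _) then (v' == v) && (y' == y) else false.

Definition decoded_family (v : 'I_m) : {set 'I_m} :=
  [set y | [exists k in K, labelled v y (P k)]].

Definition decoded_trek (v y : 'I_m) : halftrek m :=
  if [pick k in K | labelled v y (P k)] is Some k then
    if decode (P k) is Some (_, _, T) then T else (false, y, [::])
  else (false, y, [::]).

Local Notation Yf := decoded_family.
Local Notation Tr := decoded_trek.

Lemma decoded_spec v y : y \in Yf v ->
  exists2 k, k \in K & P k = trek_walk v y (Tr v y) /\ trek_ok v y (Tr v y).
Proof.
rewrite inE /decoded_trek => /existsP[k0 /andP[k0K hk0]].
case: pickP => [k /andP[kK hk] | none]; last by move: (none k0); rewrite k0K hk0.
have [v' [y' [T [hd hw hok]]]] := decodeP (linkP.1 k kK).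
move: hk; rewrite /labelled hd => /andP[/eqP ev /eqP ey]; subst v' y'.
by exists k.
Qed.

Lemma decoded_meet v y v' y' z : y \in Yf v -> y' \in Yf v' ->
  z \in verts (trek_walk v y (Tr v y)) -> z \in verts (trek_walk v' y' (Tr v' y')) ->
  [/\ v = v', y = y' & ht_right (Tr v y) = ht_right (Tr v' y')].
Proof.
move=> hy hy'; have [k kK [hk [vy _ _ _]]] := decoded_spec hy.
have [k' k'K [hk' _]] := decoded_spec hy'.
rewrite -hk -hk' => z1 z2; have ekk := linkP.2 _ _ _ kK k'K z1 z2.
by apply: trek_walk_inj vy _; rewrite -hk -hk' ekk.
Qed.

Lemma decoded_cover v z :
  z \in pa D v -> exists2 y, y \in Yf v & ht_target (Tr v y) = z.
Proof.
move=> hz; have zB : fR v z \in Bs by rewrite inE.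
have [k kK hl] := linkage_onto_last linkP cardK zB.
have [v' [y [T [hd hk [vy _ _ _]]]]] := decodeP (linkP.1 k kK).
move: hl; rewrite hk /trek_walk /ht_right /= last_map => -[ev ez]; subst v'.
have hy : y \in Yf v by rewrite inE; apply/existsP; exists k; rewrite kK /labelled hd !eqxx.
exists y => //; rewrite -ez; apply/esym/ht_target_right.
have [k0 k0K [hk0 _]] := decoded_spec hy.
have ek : k = k0.
  by apply: (linkP.2 _ _ (Lnode v y) kK k0K); rewrite ?hk ?hk0 mem_head.
by rewrite -ek hk in hk0; case: (trek_walk_inj vy hk0).
Qed.

(* The decoded half-treks for v form a system onto pa(v) with no sided
   intersection, since their walks are disjoint. *)
Lemma decoded_HTC v : HTC D B (Yf v) v.
Proof.
have ok y : y \in Yf v -> trek_ok v y (Tr v y) by move=> /decoded_spec[k _ []].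
have meet y y' z : y \in Yf v -> y' \in Yf v -> z \in ht_right (Tr v y) ->
    z \in ht_right (Tr v y') -> y = y'.
  move=> hy hy' z1 z2.
  by case: (decoded_meet (z := fR v z) hy hy'); rewrite // mem_trek_walk map_f ?orbT.
have inj : {in Yf v &, injective (fun y => ht_target (Tr v y))}.
  move=> y y' hy hy' e; apply: (meet _ _ _ hy hy' (ht_target_mem _)).
  by rewrite e; exact: ht_target_mem.
have img : [set ht_target (Tr v y) | y in Yf v] = pa D v.
  apply/setP => z; apply/imsetP/idP => [[y hy ->] | /decoded_cover[y hy <-]].
    by case: (ok y hy).
  by exists y.
split.
- by rewrite -img card_in_imset.
- apply/setP => y; rewrite in_setI in_set0; case hy: (y \in Yf v) => //=.
  by have [vy nb _ _] := ok y hy; rewrite !inE eq_sym (negbTE vy) (negbTE nb).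
exists (Tr v); split=> // [y /ok[] //|y y' hy hy' yy'].
split; first by rewrite disjoint1 inE.
rewrite disjoint_has; apply/hasPn => z z1; apply/negP => z2.
by rewrite (meet _ _ z hy hy' z1 z2) eqxx in yy'.
Qed.

(* A reciprocal pair would make two walks share the node L{v,w}. *)
Lemma decoded_no_recip : ~ (exists v w, [/\ v != w, v \in Yf w & w \in Yf v]).
Proof.
move=> [v [w [vw hv hw]]].
have [] := decoded_meet (z := Lnode w v) hv hw; rewrite ?mem_trek_walk ?eqxx //.
  by rewrite Lnode_sym ?eqxx // eq_sym.
by move=> e _ _; rewrite e eqxx in vw.
Qed.

End Decode.
End FlowNetwork.

Local Open Scope ring_scope.

Theorem mainTheorem10 (R : realFieldType) (m : nat) (D B : rel 'I_m)
  (hD : irreflexive D) (hB : irreflexive B) (hBsym : symmetric B) :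
  HTC_infinite_to_one D B <->
  exists f : fnode m -> fnode m -> R,
    is_max_flow D B f /\ flow_size f < (\sum_(v < m) #|pa D v|)%:R.
Proof.
have [K [P [f [linkP hf vf fmax]]]] :=
  unit_maxflow (@fedge_to_s m D B) (@fedge_from_t m D B) (fedge_s_t D B) (@fs_neq_ft m) R.
split=> [hinf | [g [[hg gmax] glt]] Yf].
  exists f; split; first by split=> // g /fmax; rewrite -vf.
  rewrite [flow_size f]vf ltr_nat ltnNge -(card_sink_nbrs D B); apply/negP => hK.
  case: (hinf (decoded_family K P)) => [[v hv]|].
    exact: hv (decoded_HTC hBsym linkP hK v).
  move=> hr; exact: (decoded_no_recip hBsym linkP hr).
apply: NNPP => hno.
have hall v : HTC D B (Yf v) v by apply: NNPP => hv; apply: hno; left; exists v.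
have hnr : ~ (exists v w, [/\ v != w, v \in Yf w & w \in Yf v]).
  by move=> h; apply: hno; right.
have [W linkW] := family_linkage hBsym hall hnr.
have [h [hh vh]] :=
  linkage_flow (@fedge_to_s m D B) (@fedge_from_t m D B) (@fs_neq_ft m) R linkW.
have cardK : #|[set k : 'I_m * 'I_m | k.2 \in Yf k.1]| = \sum_(v < m) #|pa D v|.
  by rewrite card_pairs; apply: eq_bigr => v _; case: (hall v).
by have := le_lt_trans (gmax h hh) glt; rewrite [flow_size h]vh cardK ltxx.
Qed.
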